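(* Ideal semantics is not serialisable: there is no selection function $\alpha$ and termination function $\beta$ such that $\mathrm{id}(F)=\mathcal{E}^{\alpha,\beta}(F)$ for every abstract argumentation framework $F$.
   Context: An abstract argumentation framework (AF) is a pair $F=(A,R)$ with $A$ a finite subset of a fixed universal set of arguments $\mathfrak{A}$ and $R\subseteq A\times A$ ($a\to b$ means $(a,b)\in R$). For $S\subseteq A$: $S^+=\{a\mid \exists b\in S: b\to a\}$, $S^-=\{a\mid\exists b\in S: a\to b\}$; for sets $S,S'$, $S\to S'$ means $S^+\cap S'\neq\emptyset$. $S$ is admissible if it is conflict-free and every attacker of an element of $S$ is attacked by some element of $S$. A preferred extension is an inclusion-maximal admissible set. The ideal extension is the inclusion-maximal admissible set $E$ with $E\subseteq E'$ for every preferred extension $E'$; $\mathrm{id}(F)$ is the set of ideal extensions of $F$. An initial set is a non-empty admissible set with no non-empty admissible proper subset; $\mathrm{IS}(F)$ is the set of initial sets. An initial set $S$ is unattacked if $S^-=\emptyset$; unchallenged if $S^-\neq\emptyset$ and no $S'\in\mathrm{IS}(F)$ has $S'\to S$; challenged if some $S'\in\mathrm{IS}(F)$ has $S'\to S$. Write $\mathrm{IS}^{u}(F),\mathrm{IS}^{uc}(F),\mathrm{IS}^{c}(F)$ for these sets. The reduct is $F^S=(A',R\cap(A'\times A'))$ with $A'=A\setminus(S\cup S^+)$. A selection function $\alpha$ maps any three sets $X,Y,Z$ of sets of arguments to a subset of $X\cup Y\cup Z$; a termination function $\beta$ maps pairs $(F,S)$ to $\{0,1\}$. Transitions: $(F,S)\to(F^{S'},S\cup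 S')$ whenever $S'\in\alpha(\mathrm{IS}^u(F),\mathrm{IS}^{uc}(F),\mathrm{IS}^c(F))$. $(F,S)\leadsto^{\alpha,\beta}(F',S')$ means $(F',S')$ is reachable from $(F,S)$ in finitely many (possibly zero) transitions and $\beta(F',S')=1$. $\mathcal{E}^{\alpha,\beta}(F)$ is the set of all $S$ with $(F,\emptyset)\leadsto^{\alpha,\beta}(F',S)$ for some $F'$. A semantics $\sigma$ is serialisable if there exist $\alpha,\beta$ with $\sigma(F)=\mathcal{E}^{\alpha,\beta}(F)$ for all AFs $F$. *)

From mathcomp Require Import all_boot.
From mathcomp Require Import boolp classical_sets cardinality.
Set Implicit Arguments. Unset Strict Implicit. Unset Printing Implicit Defensive.
Local Open Scope classical_set_scope.

Definition arg := nat.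

Definition AF := (set arg * set (arg * arg))%type.
Definition is_AF (F : AF) : Prop := finite_set F.1 /\ F.2 `<=` F.1 `*` F.1.

Definition splus (R : set (arg * arg)) (S : set arg) : set arg :=
  [set a | exists2 b, S b & R (b, a)].
Definition sminus (R : set (arg * arg)) (S : set arg) : set arg :=
  [set a | exists2 b, S b & R (a, b)].
Definition set_att (R : set (arg * arg)) (S S' : set arg) : Prop :=
  splus R S `&` S' !=set0.

Definition conflict_free (F : AF) (S : set arg) : Prop :=
  forall a b, S a -> S b -> ~ F.2 (a, b).
Definition admissible (F : AF) (S : set arg) : Prop :=
  [/\ S `<=` F.1, conflict_free F S &
      forall a b, S b -> F.2 (a, b) -> exists2 c, S c & F.2 (c, a)].
Definition preferred (F : AF) (S : set arg) : Prop :=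
  admissible F S /\ forall T, admissible F T -> S `<=` T -> T = S.

Definition in_all_preferred (F : AF) (E : set arg) : Prop :=
  forall P, preferred F P -> E `<=` P.
Definition ideal_ext (F : AF) (E : set arg) : Prop :=
  [/\ admissible F E, in_all_preferred F E &
      forall E', admissible F E' -> in_all_preferred F E' -> E `<=` E' -> E' = E].
Definition ideal_sem (F : AF) : set (set arg) := [set E | ideal_ext F E].

Definition initial (F : AF) (S : set arg) : Prop :=
  [/\ admissible F S, S !=set0 &
      forall T, admissible F T -> T !=set0 -> T `<=` S -> T = S].
Definition IS (F : AF) : set (set arg) := [set S | initial F S].
Definition IS_u (F : AF) : set (set arg) :=
  [set S | initial F S /\ sminus F.2 S = set0].
Definition IS_uc (F : AF) : set (set arg) :=
  [set S | [/\ initial F S, sminus F.2 S !=set0 &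
                ~ exists2 S', IS F S' & set_att F.2 S' S]].
Definition IS_c (F : AF) : set (set arg) :=
  [set S | initial F S /\ exists2 S', IS F S' & set_att F.2 S' S].

Definition reduct (F : AF) (S : set arg) : AF :=
  let A' := F.1 `\` (S `|` splus F.2 S) in (A', F.2 `&` (A' `*` A')).

Definition selfun := set (set arg) -> set (set arg) -> set (set arg) -> set (set arg).
Definition is_selection (alpha : selfun) : Prop :=
  forall X Y Z, alpha X Y Z `<=` X `|` Y `|` Z.
Definition termfun := AF -> set arg -> bool.

Definition step (alpha : selfun) (c c' : AF * set arg) : Prop :=
  exists2 S', alpha (IS_u c.1) (IS_uc c.1) (IS_c c.1) S' &
              c' = (reduct c.1 S', c.2 `|` S').

Inductive reach (alpha : selfun) : AF * set arg -> AF * set arg -> Prop :=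
| reach_refl c : reach alpha c c
| reach_step c c' c'' : step alpha c c' -> reach alpha c' c'' -> reach alpha c c''.

Definition serial_ext (alpha : selfun) (beta : termfun) (F : AF) : set (set arg) :=
  [set S | exists F', reach alpha (F, set0) (F', S) /\ beta F' S].

Definition serialisable (sigma : AF -> set (set arg)) : Prop :=
  exists (alpha : selfun) (beta : termfun),
    is_selection alpha /\ forall F, is_AF F -> sigma F = serial_ext alpha beta F.

From mathcomp Require Import all_boot.
From mathcomp Require Import boolp classical_sets cardinality.
Set Implicit Arguments. Unset Strict Implicit. Unset Printing Implicit Defensive.
Local Open Scope classical_set_scope.

(* Take F1 with attacks 0 <-> 1, 1 -> 1, 2 <-> 3, and F2 obtained by replacing
   the self-attack 1 -> 1 with 2 -> 1.  In F1 the ideal extension is {0}; in F2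
   the preferred extension {1, 3} avoids 0, so {0} is not ideal.  Yet the two
   frameworks have the same initial sets {0} (unchallenged), {2} and {3}
   (challenged), and the same reduct by {0}.  A serialisation yielding {0} in F1
   can only select {0} once and then stop, and that very run is available in F2. *)

Section Admissibility.
Variable F : AF.

Lemma admissibleU P Q : admissible F P -> admissible F Q ->
  conflict_free F (P `|` Q) -> admissible F (P `|` Q).
Proof.
move=> [PA _ Pdef] [QA _ Qdef] cfPQ; split => //.
- by move=> x [/PA|/QA].
- move=> a b [Pb|Qb] ab.
  + by have [c Pc ca] := Pdef _ _ Pb ab; exists c; [left|].
  + by have [c Qc ca] := Qdef _ _ Qb ab; exists c; [right|].
Qed.

Lemma preferred_maximal P Q : preferred F P -> admissible F Q ->
  conflict_free F (P `|` Q) -> Q `<=` P.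
Proof.
move=> [Padm Pmax] Qadm cfPQ x Qx.
have <- : P `|` Q = P by apply: Pmax (admissibleU Padm Qadm cfPQ) _ => y; left.
by right.
Qed.

Lemma in_all_preferred_compatible Q : admissible F Q ->
  (forall P, admissible F P -> conflict_free F (P `|` Q)) -> in_all_preferred F Q.
Proof.
by move=> Qadm cfQ P Ppref; apply: preferred_maximal Ppref Qadm (cfQ _ Ppref.1).
Qed.

Lemma preferred_conflicting P : admissible F P ->
  (forall x, F.1 x -> ~ P x -> exists2 p, P p & F.2 (p, x) \/ F.2 (x, p)) ->
  preferred F P.
Proof.
move=> Padm Pconf; split => // T [TA Tcf _] PT.
apply/seteqP; split => // x Tx; apply: contrapT => Px.
have [p Pp [px|xp]] := Pconf x (TA _ Tx) Px.
- exact: (Tcf p x (PT _ Pp) Tx).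
- exact: (Tcf x p Tx (PT _ Pp)).
Qed.

Lemma ideal_ext_intro E : admissible F E -> in_all_preferred F E ->
  (forall E', in_all_preferred F E' -> E' `<=` E) -> ideal_ext F E.
Proof.
move=> Eadm Eall Emax; split => // E' _ E'all EE'.
by apply/seteqP; split => //; apply: Emax.
Qed.

Lemma initial_set1 x : admissible F [set x] -> initial F [set x].
Proof.
move=> xadm; split => //; first by exists x.
by move=> T _ [y Ty] Tx; apply/seteqP; split => // _ ->; rewrite -(Tx _ Ty).
Qed.

Lemma initial_set1P (D : set arg) :
  (forall x, D x -> admissible F [set x]) ->
  (forall S, admissible F S -> S !=set0 -> exists2 x, S x & D x) ->
  forall S, initial F S <-> exists2 x, D x & S = [set x].
Proof.
move=> Dadm Dmeet S; split; last by move=> [x /Dadm xadm ->]; apply: initial_set1.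
move=> [Sadm S0 Smin]; have [x Sx Dx] := Dmeet _ Sadm S0.
by exists x => //; apply/esym/Smin; [apply: Dadm | exists x | move=> _ ->].
Qed.

End Admissibility.

Section SameInitialSets.
Variables F G : AF.
Hypothesis initial_FG : forall S, initial F S <-> initial G S.
Hypothesis attacks_FG : forall S a b, initial F S -> S b -> F.2 (a, b) <-> G.2 (a, b).

Lemma eq_sminus S : initial F S -> sminus F.2 S = sminus G.2 S.
Proof.
move=> Sinit; apply/seteqP; split => a [b Sb ab]; exists b => //.
- exact: (attacks_FG _ Sinit Sb).1.
- exact: (attacks_FG _ Sinit Sb).2.
Qed.

Lemma eq_set_att S' S : initial F S -> set_att F.2 S' S <-> set_att G.2 S' S.
Proof.
move=> Sinit; split => -[b [[a S'a ab] Sb]]; exists b; split => //; exists a => //.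
- exact: (attacks_FG _ Sinit Sb).1.
- exact: (attacks_FG _ Sinit Sb).2.
Qed.

Lemma eq_IS : IS F = IS G.
Proof. by apply/seteqP; split => S /initial_FG. Qed.

Lemma eq_IS_u : IS_u F = IS_u G.
Proof.
apply/seteqP; split => S [Sinit Sm].
- by split; [apply/initial_FG | rewrite -eq_sminus].
- by split; [apply/initial_FG | rewrite eq_sminus //; apply/initial_FG].
Qed.

Lemma eq_IS_uc : IS_uc F = IS_uc G.
Proof.
apply/seteqP; split => S [Sinit Sm Snatt].
- split; [exact/initial_FG | by rewrite -eq_sminus |].
  by rewrite -eq_IS => -[S' S'init /(eq_set_att _ Sinit) att]; apply: Snatt; exists S'.
- have SinitF : initial F S by apply/initial_FG.
  split; [by [] | by rewrite eq_sminus |].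
  by rewrite eq_IS => -[S' S'init /(eq_set_att _ SinitF) att]; apply: Snatt; exists S'.
Qed.

Lemma eq_IS_c : IS_c F = IS_c G.
Proof.
apply/seteqP; split => S [Sinit [S' S'init att]].
- by split; [exact/initial_FG | exists S'; [rewrite -eq_IS | apply/eq_set_att]].
- have SinitF : initial F S by apply/initial_FG.
  by split => //; exists S'; [rewrite eq_IS | apply/(eq_set_att _ SinitF)].
Qed.

End SameInitialSets.

(* Arguments outside [D] are removed by both reducts, so only the attacks
   on [D] matter. *)
Lemma eq_reduct (F G : AF) (D S : set arg) : F.1 = G.1 ->
  (forall a b, D b -> F.2 (a, b) <-> G.2 (a, b)) ->
  F.1 `\` D `<=` splus F.2 S -> G.1 `\` D `<=` splus G.2 S ->
  reduct F S = reduct G S.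
Proof.
move=> FG1 FG2 FD GD.
have inD (H : AF) x : H.1 `\` D `<=` splus H.2 S -> (reduct H S).1 x -> D x.
  by move=> HD [Hx nSx]; apply: contrapT => nDx; apply: nSx; right; apply: HD.
have args_sub (H K : AF) : H.1 = K.1 -> (forall a b, D b -> K.2 (a, b) -> H.2 (a, b)) ->
    H.1 `\` D `<=` splus H.2 S -> (reduct H S).1 `<=` (reduct K S).1.
  move=> HK KH HD x xS; have Dx := inD _ _ HD xS; case: xS => Hx nSx.
  split; first by rewrite -HK.
  by move=> [Sx|[s Ss sx]]; apply: nSx; [left | right; exists s => //; apply: KH].
have FGargs : (reduct F S).1 = (reduct G S).1.
  apply/seteqP; split; apply: args_sub => // a b Db.
  - exact: (FG2 a b Db).2.
  - exact: (FG2 a b Db).1.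
have DG x : (reduct G S).1 x -> D x by exact: inD.
move: FGargs DG; rewrite /reduct /= => -> DG; congr pair.
apply/seteqP; split => -[a b] [ab abA]; split => //; have /DG Db := abA.2.
- exact: (FG2 a b Db).1.
- exact: (FG2 a b Db).2.
Qed.

Section Serialisation.
Variable alpha : selfun.
Hypothesis alpha_sel : is_selection alpha.

Lemma selected_initial F S : alpha (IS_u F) (IS_uc F) (IS_c F) S -> initial F S.
Proof. by move=> /alpha_sel [[[]|[]]|[]]. Qed.

Lemma reach_sub_ext c c' : reach alpha c c' -> c.2 `<=` c'.2.
Proof. by elim=> [c0|c0 c1 c2 [S' _ ->] _ sub] x S0x //; apply: sub; left. Qed.

Lemma reach_inv c c' : reach alpha c c' ->
  c = c' \/ exists2 c1, step alpha c c1 & reach alpha c1 c'.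
Proof. by case=> [|c0 c1 c2 st r]; [left | right; exists c1]. Qed.

Lemma reach_same_ext F F' S : F.1 `&` S = set0 -> reach alpha (F, S) (F', S) -> F' = F.
Proof.
move=> FS0 /reach_inv [[->]//|[_ [S' /selected_initial [[S'A _ _] [x S'x] _] ->] r]].
have /= Sx := reach_sub_ext r (or_intror S'x).
have : (F.1 `&` S) x by split => //; apply: S'A.
by rewrite FS0.
Qed.

Lemma serial_ext_one_step (beta : termfun) F S : S !=set0 ->
  (forall S', initial F S' -> S' `<=` S -> S' = S) ->
  serial_ext alpha beta F S ->
  alpha (IS_u F) (IS_uc F) (IS_c F) S /\ beta (reduct F S) S.
Proof.
move=> [x Sx] Smin [F' [/reach_inv [[_ S0]|[_ [S' S'sel ->] r]] betaF']].
  by rewrite -S0 in Sx.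
have S'S : S' `<=` S by have := reach_sub_ext r; rewrite /= set0U.
have {S'S} E : S' = S by apply: Smin => //; exact: selected_initial S'sel.
subst S'; rewrite set0U in r; suff F'E : F' = reduct F S by rewrite -F'E.
apply: reach_same_ext r; apply/seteqP; split => // y [[_ nS] Sy].
by apply: nS; left.
Qed.

Lemma serial_ext_transfer (beta : termfun) F G S :
  IS_u F = IS_u G -> IS_uc F = IS_uc G -> IS_c F = IS_c G ->
  reduct F S = reduct G S ->
  alpha (IS_u F) (IS_uc F) (IS_c F) S -> beta (reduct F S) S ->
  serial_ext alpha beta G S.
Proof.
move=> Eu Euc Ec ER Ssel betaS; exists (reduct F S); split => //.
apply: (@reach_step _ _ (reduct G S, set0 `|` S)).
  by exists S; rewrite -?Eu -?Euc -?Ec.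
by rewrite set0U -ER; apply: reach_refl.
Qed.

End Serialisation.

Definition af_of (n : nat) (atts : seq (arg * arg)) : AF := (`I_n, [set p | p \in atts]).

Definition admissibleb (atts : seq (arg * arg)) (s : seq arg) : bool :=
  [&& all (fun a => all (fun b => (a, b) \notin atts) s) s &
      all (fun p => (p.2 \in s) ==> has (fun c => (c, p.1) \in atts) s) atts].

Definition conflict_saturated (n : nat) (atts : seq (arg * arg)) (s : seq arg) : bool :=
  all (fun x => (x \in s) || has (fun y => ((y, x) \in atts) || ((x, y) \in atts)) s)
    (iota 0 n).

Section FiniteFrameworks.
Variables (n : nat) (atts : seq (arg * arg)).

Lemma is_AF_af_of : all (fun p => (p.1 < n) && (p.2 < n)) atts -> is_AF (af_of n atts).
Proof.
move=> /allP attsn; split; first exact: finite_II.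
by move=> p /attsn /andP[].
Qed.

Lemma admissible_af_of s : all (fun x => x < n) s -> admissibleb atts s ->
  admissible (af_of n atts) [set` s].
Proof.
move=> /allP sn /andP[/allP cf /allP def]; split => /=.
- by move=> x /sn.
- by move=> a b sa sb; apply/negP; have /allP := cf _ sa; apply.
- move=> a b sb ab; have /implyP/(_ sb) := def _ ab.
  by move=> /hasP[c sc ca]; exists c.
Qed.

Lemma preferred_af_of s : all (fun x => x < n) s -> admissibleb atts s ->
  conflict_saturated n atts s -> preferred (af_of n atts) [set` s].
Proof.
move=> sn sadm /allP sat; apply: preferred_conflicting; first exact: admissible_af_of.
move=> x xn /negP xs; have := sat x; rewrite mem_iota add0n => /(_ xn).
by rewrite (negbTE xs) => /hasP[y sy /orP yx]; exists y.
Qed.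

End FiniteFrameworks.

Lemma set1_seq (x : arg) : [set` [:: x]] = [set x].
Proof. by apply/seteqP; split => y /=; rewrite inE => /eqP. Qed.

Definition F1 : AF := af_of 4 [:: (0, 1); (1, 0); (1, 1); (2, 3); (3, 2)].
Definition F2 : AF := af_of 4 [:: (0, 1); (1, 0); (2, 1); (2, 3); (3, 2)].

Lemma is_AF_F1 : is_AF F1. Proof. exact: is_AF_af_of. Qed.
Lemma is_AF_F2 : is_AF F2. Proof. exact: is_AF_af_of. Qed.

Definition init_args : set arg := [set` [:: 0; 2; 3]].

Lemma admissible_init_args atts :
  all (fun x => admissibleb atts [:: x]) [:: 0; 2; 3] ->
  forall x, init_args x -> admissible (af_of 4 atts) [set x].
Proof.
move=> /allP adm x xinit; rewrite -set1_seq; apply: admissible_af_of (adm _ xinit).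
by move: xinit; rewrite /init_args /= !inE => /or3P[]/eqP->.
Qed.

Lemma initial_F1 S : initial F1 S <-> exists2 x, init_args x & S = [set x].
Proof.
apply: initial_set1P => [|T [TA Tcf _] [x Tx]]; first exact: admissible_init_args.
have := TA _ Tx; case: x Tx => [|[|[|[|x]]]] Tx //= _; try by eexists; first exact: Tx.
by exfalso; exact: (Tcf 1 1 Tx Tx).
Qed.

Lemma initial_F2 S : initial F2 S <-> exists2 x, init_args x & S = [set x].
Proof.
apply: initial_set1P => [|T [TA _ Tdef] [x Tx]]; first exact: admissible_init_args.
have := TA _ Tx; case: x Tx => [|[|[|[|x]]]] Tx //= _; try by eexists; first exact: Tx.
have [c Tc] := Tdef 2 1 Tx isT.
by have := TA _ Tc; case: c Tc => [|[|[|[|c]]]] Tc //= _ _; exists 3.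
Qed.

Lemma initial_F12 S : initial F1 S <-> initial F2 S.
Proof. by rewrite initial_F1 initial_F2. Qed.

Lemma F12_attacks a b : b != 1 -> F1.2 (a, b) <-> F2.2 (a, b).
Proof. by move=> /negbTE b1; rewrite /= !inE !xpair_eqE b1 !andbF. Qed.

Lemma F12_attacks_initial S a b : initial F1 S -> S b -> F1.2 (a, b) <-> F2.2 (a, b).
Proof.
move=> /initial_F1 [x xinit ->] bx; apply: F12_attacks; move: bx xinit => /= ->.
by rewrite /init_args /= !inE => /or3P[]/eqP->.
Qed.

Lemma reduct_F12 : reduct F1 [set 0] = reduct F2 [set 0].
Proof.
apply: (@eq_reduct _ _ (~` [set 1])) => // [a b /eqP|x [_ /contrapT ->]|x [_ /contrapT ->]].
- exact: F12_attacks.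
- by exists 0.
- by exists 0.
Qed.

Lemma F1_attacks0 a : F1.2 (a, 0) <-> a = 1.
Proof. by rewrite /= !inE !xpair_eqE /= ?andbF ?andbT /= orbF; split => /eqP. Qed.

Lemma F1_attacked_by0 b : F1.2 (0, b) <-> b = 1.
Proof. by rewrite /= !inE !xpair_eqE /= orbF; split => /eqP. Qed.

Lemma ideal_F1 : ideal_ext F1 [set 0].
Proof.
have adm0 : admissible F1 [set 0] by rewrite -set1_seq; apply: admissible_af_of.
apply: ideal_ext_intro => // [|E' E'pref x E'x].
  apply: in_all_preferred_compatible => // P [_ Pcf _] a b.
  have P1 : ~ P 1 by move=> P1; exact: (Pcf _ _ P1 P1 isT).
  move=> [Pa|->] [Pb|->] //; first exact: Pcf.
  - by move=> /F1_attacks0 a1; rewrite a1 in Pa.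
  - by move=> /F1_attacked_by0 b1; rewrite b1 in Pb.
have pref02 : preferred F1 [set` [:: 0; 2]] by exact: preferred_af_of.
have pref03 : preferred F1 [set` [:: 0; 3]] by exact: preferred_af_of.
have /= := E'pref _ pref02 x E'x; have /= := E'pref _ pref03 x E'x.
by rewrite !inE => /orP[/eqP//|/eqP->].
Qed.

Lemma not_ideal_F2 : ~ ideal_ext F2 [set 0].
Proof.
have pref13 : preferred F2 [set` [:: 1; 3]] by exact: preferred_af_of.
by move=> [_ /(_ _ pref13) /(_ 0 erefl)].
Qed.

Theorem theorem8 : ~ serialisable ideal_sem.
Proof.
move=> [alpha [beta [alpha_sel sigmaE]]].
have ser1 : serial_ext alpha beta F1 [set 0].
  by rewrite -sigmaE; [exact: ideal_F1 | exact: is_AF_F1].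
have min0 S : initial F1 S -> S `<=` [set 0] -> S = [set 0].
  by move=> /initial_F1 [x _ ->] /(_ x erefl) /= ->.
have [sel0 beta0] := serial_ext_one_step alpha_sel (ex_intro _ 0 erefl) min0 ser1.
have ser2 : serial_ext alpha beta F2 [set 0].
  apply: serial_ext_transfer reduct_F12 sel0 beta0.
  - exact: eq_IS_u initial_F12 F12_attacks_initial.
  - exact: eq_IS_uc initial_F12 F12_attacks_initial.
  - exact: eq_IS_c initial_F12 F12_attacks_initial.
by apply: not_ideal_F2; move: ser2; rewrite -sigmaE //; exact: is_AF_F2.
Qed.
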